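(* Let $\sigma=\sigma_1\cdots\sigma_k\in\mathfrak S_k$ be a consecutive pattern ($k\ge1$). Let $12\text{-}\sigma$ denote the generalized pattern $12\text{-}(\sigma_1+2)\cdots(\sigma_k+2)$ and $21\text{-}\sigma$ the generalized pattern $21\text{-}(\sigma_1+2)\cdots(\sigma_k+2)$. Then $A_{12\text{-}\sigma}(z)=A_{21\text{-}\sigma}(z)$.
   Context: $\mathfrak S_n$ is the symmetric group on $\{1,\dots,n\}$, permutations in one-line notation. A generalized pattern of length $m$ is a permutation $\sigma_1\cdots\sigma_m\in\mathfrak S_m$ with, between each pair of adjacent entries, either a dash ''-'' or nothing. A permutation $\pi\in\mathfrak S_n$ contains it if there are indices $i_1<\dots<i_m$ with $i_{j+1}=i_j+1$ whenever there is no dash between $\sigma_j$ and $\sigma_{j+1}$, and with $\pi_{i_a}<\pi_{i_b}$ iff $\sigma_a<\sigma_b$ for all $a,b$; otherwise $\pi$ avoids it. A consecutive pattern has no dashes. $\alpha_n(\sigma)$ is the number of permutations in $\mathfrak S_n$ avoiding $\sigma$ ($\alpha_0=1$) and $A_\sigma(z)=\sum_{n\ge0}\alpha_n(\sigma)z^n/n!$. *)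

From mathcomp Require Import all_boot all_order all_algebra.
From mathcomp Require Import fingroup perm.
Set Implicit Arguments. Unset Strict Implicit. Unset Printing Implicit Defensive.
Import GRing.Theory Num.Theory.

(* A generalized pattern: its one-line notation [gp_seq] (a permutation of
   {1,..,m}, m = size gp_seq) and [gp_dash j] = true iff there is a dash
   between the entries at (0-based) positions j and j+1. *)
Record gpat := GPat { gp_seq : seq nat; gp_dash : nat -> bool }.

Definition gcontains (p : gpat) (n : nat) (pi : 'S_n) : bool :=
  [exists f : {ffun 'I_(size (gp_seq p)) -> 'I_n},
    [forall a : 'I_(size (gp_seq p)), forall b : 'I_(size (gp_seq p)),
      ((a < b)%N ==> (f a < f b)%N) &&
      (((val b == (val a).+1) && ~~ gp_dash p a) ==> (val (f b) == (val (f a)).+1)) &&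
      ((pi (f a) < pi (f b))%N == (nth 0 (gp_seq p) a < nth 0 (gp_seq p) b)%N)]].

Definition alpha (p : gpat) (n : nat) : nat :=
  #|[set pi : 'S_n | ~~ gcontains p pi]|.

(* The exponential generating function A_p(z) = sum alpha_n z^n / n!,
   as a formal power series given by its coefficient sequence. *)
Definition egf (p : gpat) : nat -> rat :=
  fun n => ((alpha p n)%:R / (n`!)%:R)%R.

Definition oneline (k : nat) (s : 'S_k) : seq nat :=
  [seq (val (s j)).+1 | j <- enum 'I_k].

(* 12-sigma = 12-(s_1+2)...(s_k+2) and 21-sigma: dash only after position 1 *)
Definition pat12 (k : nat) (s : 'S_k) : gpat :=
  GPat ([:: 1; 2] ++ [seq x + 2 | x <- oneline s]) (fun j => j == 1).
Definition pat21 (k : nat) (s : 'S_k) : gpat :=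
  GPat ([:: 2; 1] ++ [seq x + 2 | x <- oneline s]) (fun j => j == 1).

From mathcomp Require Import all_boot all_order all_algebra.
From mathcomp Require Import fingroup perm zify.
From Stdlib Require Import FunctionalExtensionality.
Set Implicit Arguments. Unset Strict Implicit. Unset Printing Implicit Defensive.

(* Call a position [p] of [pi] small when [pi p] is smaller than every entry
   of some occurrence of [sigma] strictly to the right of [p].  Then [pi]
   contains 12-sigma iff two adjacent small positions form an ascent, and
   21-sigma iff they form a descent.  Reversing every maximal run of
   consecutive small positions exchanges the two.  It does not change the set
   of small positions: a small position is always witnessed by an occurrence
   of [sigma] consisting of non-small positions, which the reversal fixes.
   Hence the reversal is an involution of S_n mapping the avoiders of 12-sigma
   onto those of 21-sigma. *)

Section RunFlip.
Variables (S : pred nat) (n : nat).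
Hypothesis S_bounded : forall p, S p -> p < n.

Fixpoint run_start p := if p is q.+1 then (if S q then run_start q else p) else 0.

Fixpoint run_end_from fuel p :=
  if fuel is f.+1 then (if S p.+1 then run_end_from f p.+1 else p) else p.

Definition run_end p := run_end_from n p.

Definition run_flip p := if S p then run_start p + run_end p - p else p.

Lemma run_startP p :
  [/\ run_start p <= p, forall q, run_start p <= q < p -> S q
    & 0 < run_start p -> ~~ S (run_start p).-1].
Proof.
elim: p => [|p [le_p inS edge]] /=; first by split=> // q; lia.
case: ifP => Sp; last by split=> // [q|]; [lia | rewrite /= Sp].
split=> [||//]; first lia.
move=> q q_lt; have [lt_qp|le_pq] := ltnP q p; first by apply: inS; lia.
by have -> : q = p by lia.
Qed.

Lemma run_end_fromP f p :
  [/\ p <= run_end_from f p, forall q, p < q <= run_end_from f p -> S q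
    & run_end_from f p < p + f -> ~~ S (run_end_from f p).+1].
Proof.
elim: f p => [|f IH] p /=; first by split=> // [q|]; [lia | rewrite addn0 ltnn].
case: ifP => Sp1; last by split=> // [q|_]; [lia | rewrite Sp1].
have [le_p inS edge] := IH p.+1; split=> [||lt_f]; first lia.
- move=> q q_lt; have [lt_q|le_q] := ltnP p.+1 q; first by apply: inS; lia.
  by have -> : q = p.+1 by lia.
- by apply: edge; lia.
Qed.

Lemma run_endP p :
  [/\ p <= run_end p, forall q, p < q <= run_end p -> S q
    & run_end p < p + n -> ~~ S (run_end p).+1].
Proof. exact: run_end_fromP. Qed.

Lemma run_end_edge p : ~~ S (run_end p).+1.
Proof.
have [_ _ edge] := run_endP p.
have [/edge //|le_np] := ltnP (run_end p) (p + n).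
by apply/negP => /S_bounded; lia.
Qed.

Lemma run_startE p a :
  a <= p -> (forall q, a <= q < p -> S q) -> (0 < a -> ~~ S a.-1) -> run_start p = a.
Proof.
have [le_p inS edge] := run_startP p => le_a inSa edge_a.
case: (ltngtP (run_start p) a) => // lt.
- by move: (edge_a (leq_ltn_trans (leq0n _) lt)); rewrite inS //; lia.
- by move: (edge (leq_ltn_trans (leq0n _) lt)); rewrite inSa //; lia.
Qed.

Lemma run_endE p b : p <= b -> (forall q, p < q <= b -> S q) -> ~~ S b.+1 -> run_end p = b.
Proof.
have [le_p inS _] := run_endP p => le_b inSb edge_b.
case: (ltngtP (run_end p) b) => // lt.
- by move: (run_end_edge p); rewrite inSb //; lia.
- by move: edge_b; rewrite inS //; lia.
Qed.

Lemma run_mem p q : S p -> run_start p <= q <= run_end p -> S q.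
Proof.
move=> Sp q_in; have [le_s inS _] := run_startP p; have [le_e inE _] := run_endP p.
by case: (ltngtP q p) => [lt|lt|->]; [apply: inS | apply: inE |]; lia.
Qed.

Lemma run_same p q : S p -> run_start p <= q <= run_end p ->
  run_start q = run_start p /\ run_end q = run_end p.
Proof.
move=> Sp q_in; have [le_s _ edge] := run_startP p.
split; first by apply: run_startE => // [|r r_in]; [lia | apply: (run_mem Sp); lia].
apply: run_endE; [lia | move=> r r_in; apply: (run_mem Sp); lia | exact: run_end_edge].
Qed.

Lemma run_flip_in p : S p -> run_start p <= run_flip p <= run_end p.
Proof.
move=> Sp; have [le_s _ _] := run_startP p; have [le_e _ _] := run_endP p.
by rewrite /run_flip Sp; lia.
Qed.

Lemma run_flip_out p : ~~ S p -> run_flip p = p.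
Proof. by rewrite /run_flip => /negbTE ->. Qed.

Lemma mem_run_flip p : S (run_flip p) = S p.
Proof.
case Sp: (S p); last by rewrite run_flip_out ?Sp.
exact: run_mem Sp (run_flip_in Sp).
Qed.

Lemma run_flipK : involutive run_flip.
Proof.
move=> p; case Sp: (S p); last by rewrite !run_flip_out ?Sp.
have [start_eq end_eq] := run_same Sp (run_flip_in Sp).
have [le_s _ _] := run_startP p; have [le_e _ _] := run_endP p.
by rewrite {1}/run_flip mem_run_flip Sp start_eq end_eq /run_flip Sp; lia.
Qed.

Lemma run_flip_lt p : p < n -> run_flip p < n.
Proof.
move=> lt_pn; case Sp: (S p); last by rewrite run_flip_out ?Sp.
have [le_s _ _] := run_startP p; have [le_e _ _] := run_endP p.
have /S_bounded : S (run_end p) by apply: (run_mem Sp); lia.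
by have := run_flip_in Sp; lia.
Qed.

Lemma run_flip_succ i : S i -> S i.+1 -> run_flip i = (run_flip i.+1).+1.
Proof.
move=> Si Si1; have [le_s _ _] := run_startP i; have [le_e _ _] := run_endP i.
have lt_e : i < run_end i.
  by case: ltngtP le_e (run_end_edge i) => // <-; rewrite Si1.
have [start_eq end_eq] : run_start i.+1 = run_start i /\ run_end i.+1 = run_end i.
  by apply: run_same => //; lia.
by rewrite /run_flip Si Si1 start_eq end_eq; lia.
Qed.
End RunFlip.

Lemma run_flip_eq (S1 S2 : pred nat) n : S1 =1 S2 -> run_flip S1 n =1 run_flip S2 n.
Proof.
move=> eqS p; have start_eq : run_start S1 =1 run_start S2.
  by elim=> //= q ->; rewrite eqS.
have end_eq f : run_end_from S1 f =1 run_end_from S2 f.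
  by elim: f => //= f IH q; rewrite eqS IH.
by rewrite /run_flip /run_end eqS start_eq end_eq.
Qed.

Section SmallPositions.
Variables (n k l0 : nat) (s : nat -> nat).

Definition occurs_at (g : nat -> nat) j := (j + k <= n) &&
  all (fun l => all (fun l' => (g (j + l) < g (j + l')) == (s l < s l')) (iota 0 k)) (iota 0 k).

Definition small g p :=
  has (fun j => [&& p < j, occurs_at g j & g p < g (j + l0)]) (iota 0 n.+1).

Definition contains12 g :=
  exists i j, [/\ i.+2 <= j, occurs_at g j, g i < g i.+1 & g i.+1 < g (j + l0)].
Definition contains21 g :=
  exists i j, [/\ i.+2 <= j, occurs_at g j, g i.+1 < g i & g i < g (j + l0)].

Lemma occurs_atP g j : reflect
  (j + k <= n /\ forall l l', l < k -> l' < k -> (g (j + l) < g (j + l')) = (s l < s l'))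
  (occurs_at g j).
Proof.
apply: (iffP andP) => [[fit /allP ord_eq]|[fit ord_eq]]; split=> //.
- move=> l l' lt_l lt_l'; have /allP ord_l := ord_eq l ltac:(by rewrite mem_iota).
  by have /eqP := ord_l l' ltac:(by rewrite mem_iota).
- apply/allP => l; rewrite mem_iota => /= lt_l.
  by apply/allP => l'; rewrite mem_iota => /= lt_l'; rewrite ord_eq.
Qed.

Lemma occurs_at_eq g g' j :
  occurs_at g j -> (forall l, l < k -> g' (j + l) = g (j + l)) -> occurs_at g' j.
Proof.
move=> /occurs_atP [fit ord_eq] eq_g; apply/occurs_atP; split=> // l l' lt_l lt_l'.
by rewrite !eq_g // ord_eq.
Qed.

Lemma smallP g p :
  reflect (exists j, [/\ p < j, occurs_at g j & g p < g (j + l0)]) (small g p).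
Proof.
apply: (iffP hasP) => [[j _ /and3P]|[j [lt_pj occ lt_g]]]; first by exists j.
exists j; last by rewrite lt_pj occ lt_g.
by move/occurs_atP: occ => [fit _]; rewrite mem_iota; lia.
Qed.

Lemma small_lt g p : small g p -> p < n.
Proof. by move/smallP => [j [lt_pj /occurs_atP [fit _] _]]; lia. Qed.

Lemma contains12_small g :
  contains12 g <-> exists i, [/\ small g i, small g i.+1 & g i < g i.+1].
Proof.
split=> [[i [j [lt_ij occ lt_i lt_i1]]]|[i [_ /smallP [j [lt_ij occ lt_g]] lt_i]]].
- by exists i; split=> //; apply/smallP; exists j; split=> //; lia.
- by exists i, j.
Qed.

Hypothesis l0_lt : l0 < k.
Hypothesis s_min : forall l, l < k -> l != l0 -> s l0 < s l.

Lemma occurs_at_min g j l : occurs_at g j -> l < k -> g (j + l0) <= g (j + l).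
Proof.
move=> /occurs_atP [_ ord_eq] lt_l; have [->//|neq] := eqVneq l l0.
by rewrite ltnW // ord_eq // s_min.
Qed.

(* Climbing to occurrences with ever larger minimum must stop, since [g] is bounded by [n]. *)
Lemma occurrence_free_of_small g q j :
  (forall p, p < n -> g p < n) -> q < j -> occurs_at g j -> g q < g (j + l0) ->
  exists j', [/\ q < j', occurs_at g j', g q < g (j' + l0)
                & forall l, l < k -> ~~ small g (j' + l)].
Proof.
move=> g_bounded; have [d] := ubnP (n - g (j + l0)).
elim: d j => // d IH j lt_d lt_qj occ lt_g.
have [/existsP [l /smallP [j' [lt_j' occ' lt_g']]]|no_small] :=
  boolP [exists l : 'I_k, small g (j + l)]; last first.
  by exists j; split=> // l lt_l; move/existsPn: no_small => /(_ (Ordinal lt_l)).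
have le_min := occurs_at_min occ (ltn_ord l).
have /g_bounded : j' + l0 < n by move/occurs_atP: occ' => [fit _]; lia.
by move=> lt_n; apply: (IH j'); lia.
Qed.

Lemma contains21_small g :
  contains21 g <-> exists i, [/\ small g i, small g i.+1 & g i.+1 < g i].
Proof.
split=> [[i [j [lt_ij occ lt_i1 lt_i]]]|[i [/smallP [j [lt_ij occ lt_g]] _ lt_i]]].
- by exists i; split=> //; apply/smallP; exists j; split=> //; lia.
- exists i, j; split=> //; rewrite ltn_neqAle lt_ij andbT; apply/eqP => j_eq.
  have := occurs_at_min occ (leq_ltn_trans (leq0n _) l0_lt).
  by rewrite addn0 -j_eq in lt_g *; lia.
Qed.

Section Flip.
Variable g : nat -> nat.
Hypothesis g_bounded : forall p, p < n -> g p < n.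

Local Notation flip := (run_flip (small g) n).
Let small_bounded : forall p, small g p -> p < n := small_lt (g:=g).

Lemma flip_bounded p : p < n -> g (flip p) < n.
Proof. by move=> lt_pn; apply/g_bounded/(run_flip_lt small_bounded). Qed.

Lemma small_flip_of_small p : small g p -> small (g \o flip) p.
Proof.
move=> Sp; have /smallP [j [lt_j occ lt_g]] : small g (flip p) by rewrite mem_run_flip.
have [j' [lt_j' occ' lt_g' clean]] := occurrence_free_of_small g_bounded lt_j occ lt_g.
have fix_occ l : l < k -> g (flip (j' + l)) = g (j' + l).
  by move=> lt_l; rewrite run_flip_out ?clean.
apply/smallP; exists j'; split; last 2 first.
- exact: occurs_at_eq occ' fix_occ.
- by rewrite /= fix_occ.
(* [j'] cannot lie inside the run of [p], which contains [flip p] *)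
rewrite ltnNge; apply/negP => le_j'p.
have [le_s _ _] := run_startP (small g) p; have [le_e _ _] := run_endP (small g) n p.
have flip_in := run_flip_in n Sp.
have /negP := clean 0 (leq_ltn_trans (leq0n _) l0_lt); rewrite addn0; apply.
by apply: (run_mem (n:=n) Sp); lia.
Qed.

Lemma small_flip : small (g \o flip) =1 small g.
Proof.
move=> p; apply/idP/idP => [|/small_flip_of_small //].
case Sp: (small g p) => // /smallP [j [lt_j occ lt_g]].
have [j' [lt_j' occ' lt_g' clean]] := occurrence_free_of_small flip_bounded lt_j occ lt_g.
have fix_occ l : l < k -> g (j' + l) = g (flip (j' + l)).
  move=> lt_l; rewrite run_flip_out //.
  by apply: contra (clean l lt_l); apply: small_flip_of_small.
rewrite -Sp; apply/smallP; exists j'; split=> //.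
- exact: occurs_at_eq occ' fix_occ.
- by move: lt_g'; rewrite /= run_flip_out ?Sp // -fix_occ.
Qed.

Lemma contains12_flip : contains12 g <-> contains21 (g \o flip).
Proof.
have flip_succ i : small g i -> small g i.+1 -> flip i = (flip i.+1).+1.
  exact: run_flip_succ.
rewrite contains12_small contains21_small.
split=> [[i [Si Si1 lt_g]]|[i]]; last rewrite !small_flip => -[Si Si1 lt_g].
- exists (flip i.+1); rewrite !small_flip -flip_succ // !mem_run_flip.
  by split=> //=; rewrite !(run_flipK small_bounded).
- by exists (flip i.+1); rewrite -flip_succ // !mem_run_flip.
Qed.
End Flip.
End SmallPositions.

Definition pval n (pi : 'S_n) (p : nat) : nat := nth 0 [seq val (pi x) | x <- enum 'I_n] p.

Lemma pvalE n (pi : 'S_n) (x : 'I_n) : pval pi x = pi x.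
Proof. by rewrite /pval (nth_map x) ?size_enum_ord // nth_ord_enum. Qed.

Lemma pval_out n (pi : 'S_n) p : n <= p -> pval pi p = 0.
Proof. by move=> le_np; rewrite /pval nth_default // size_map size_enum_ord. Qed.

Lemma pval_lt n (pi : 'S_n) p : p < n -> pval pi p < n.
Proof. by move=> lt_pn; rewrite (pvalE pi (Ordinal lt_pn)). Qed.

(* Positions of an occurrence of [u0 u1 - t]: [u0 u1] at [i, i+1], [t] from [j] on. *)
Definition dash1_pos i j a := if a is l.+2 then j + l else i + a.

Lemma dash1_pos_mono i j a b : i.+2 <= j -> a < b -> dash1_pos i j a < dash1_pos i j b.
Proof. by case: a => [|[|a]]; case: b => [|[|b]] /=; lia. Qed.

Lemma dash1_pos_succ i j a : a != 1 -> dash1_pos i j a.+1 = (dash1_pos i j a).+1.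
Proof. by case: a => [|[|a]] //= _; rewrite ?addn0 ?addn1 ?addnS. Qed.

Lemma gcontains_dash1 (u0 u1 : nat) (t : seq nat) n (pi : 'S_n) : 0 < size t ->
  let u := [:: u0, u1 & t] in
  gcontains (GPat u (fun j => j == 1)) pi <->
  exists i j, [/\ i.+2 <= j, j + size t <= n & forall a b, a < size u -> b < size u ->
    (pval pi (dash1_pos i j a) < pval pi (dash1_pos i j b)) = (nth 0 u a < nth 0 u b)].
Proof.
move=> t_gt0 u; split.
- case/existsP => f /forallP f_occ.
  pose F a := val (f (inord a)).
  have F_spec a b : a < size u -> b < size u ->
    [/\ a < b -> F a < F b, b = a.+1 -> a != 1 -> F b = (F a).+1
      & (pval pi (F a) < pval pi (F b)) = (nth 0 u a < nth 0 u b)].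
    move=> lt_a lt_b; have /forallP/(_ (inord b)) := f_occ (inord a).
    rewrite !pvalE /= !inordK // => /andP [/andP [/implyP mono /implyP succ] /eqP ord_eq].
    by split=> // eq_b a_neq1; move: succ; rewrite eq_b eqxx a_neq1 => /(_ isT) /eqP.
  have F_succ a : a.+1 < size u -> a != 1 -> F a.+1 = (F a).+1.
    by move=> lt_a a_neq1; have [_ -> //] := F_spec a a.+1 (ltnW lt_a) lt_a.
  have F_dash1 a : a < size u -> F a = dash1_pos (F 0) (F 2) a.
    case: a => [|[|l]] lt_a /=; [by rewrite addn0 | by rewrite F_succ ?addn1 |].
    elim: l lt_a => [|l IH] lt_l; first by rewrite addn0.
    by rewrite F_succ // IH ?addnS // ltnW.
  exists (F 0), (F 2); split.
  + by have [lt12 _ _] := F_spec 1 2 isT t_gt0; move: (lt12 isT); rewrite F_succ.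
  + have := ltn_ord (f (inord (size t).-1.+2)).
    by rewrite -/(F _) F_dash1 /=; [lia | rewrite /u /=; lia].
  + by move=> a b lt_a lt_b; rewrite -!F_dash1 //; have [_ _ ->] := F_spec a b lt_a lt_b.
- case=> i [j [lt_ij fit ord_eq]].
  have n_gt0 : 0 < n by lia.
  pose x0 : 'I_n := Ordinal n_gt0.
  have pos_lt a : a < size u -> dash1_pos i j a < n by case: a => [|[|l]] /=; lia.
  apply/existsP; exists [ffun a : 'I_(size u) => insubd x0 (dash1_pos i j a)].
  apply/forallP => a; apply/forallP => b; rewrite !ffunE !val_insubd !pos_lt //.
  rewrite -!pvalE !val_insubd !pos_lt // ord_eq //.
  rewrite eqxx andbT; apply/andP; split; apply/implyP; first exact: dash1_pos_mono.
  by move=> /andP [/eqP -> a_neq1]; rewrite dash1_pos_succ.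
Qed.

Section ShiftedPattern.
Variables (K : nat) (sigma : 'S_K.+1).
Local Notation k := K.+1.

Let s (l : nat) : nat := sigma (inord l).
Let l0 : nat := (sigma^-1)%g ord0.

Let l0_lt : l0 < k. Proof. exact: ltn_ord. Qed.

Let s_min l : l < k -> l != l0 -> s l0 < s l.
Proof.
move=> lt_l neq_l; rewrite /s /l0 inord_val permKV lt0n; apply: contra neq_l => /eqP s_l.
have {}s_l : sigma (inord l) = ord0 by apply: val_inj.
by rewrite /l0 -s_l permK inordK.
Qed.

Let tail := [seq x + 2 | x <- oneline sigma].

Let size_tail : size tail = k.
Proof. by rewrite !size_map -enumT size_enum_ord. Qed.

Let nth_tail l : l < k -> nth 0 tail l = (s l).+3.
Proof.
move=> lt_l; rewrite (nth_map 0) ?size_map -?enumT ?size_enum_ord //.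
rewrite (nth_map ord0) -?enumT ?size_enum_ord // addn2.
by congr (val (sigma _)).+3; apply: val_inj; rewrite /= nth_enum_ord // inordK.
Qed.

Lemma gcontains_shifted (u0 u1 n : nat) (pi : 'S_n) : u0 <= 2 -> u1 <= 2 ->
  let g := pval pi in
  gcontains (GPat [:: u0, u1 & tail] (fun j => j == 1)) pi <->
  exists i j, [/\ i.+2 <= j, occurs_at n k s g j,
    (g i < g i.+1) = (u0 < u1), (g i.+1 < g i) = (u1 < u0)
    & maxn (g i) (g i.+1) < g (j + l0)].
Proof.
move=> le_u0 le_u1 g; rewrite gcontains_dash1 size_tail //; split.
- case=> i [j [lt_ij fit ord_eq]]; exists i, j; split.
  + done.
  + apply/occurs_atP; split=> // l l' lt_l lt_l'.
    by have := ord_eq l.+2 l'.+2; rewrite /= !nth_tail // !ltnS; apply; rewrite /= size_tail.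
  + by have /= := ord_eq 0 1; rewrite addn0 addn1; apply.
  + by have /= := ord_eq 1 0; rewrite addn0 addn1; apply.
  + have below a : a < 2 -> g (i + a) < g (j + l0).
      move=> lt_a; have := ord_eq a l0.+2; rewrite /= nth_tail //.
      by case: a lt_a => [|[|]] //= _ ->; rewrite ?size_tail //; lia.
    by move: (below 0 isT) (below 1 isT); rewrite gtn_max addn0 addn1 => -> ->.
- case=> i [j [lt_ij occ lt01 lt10 below]]; exists i, j.
  move/occurs_atP: (occ) => [fit ord_eq]; split=> // a b.
  have below_occ c l : c < 2 -> l < k -> g (i + c) < g (j + l).
    move=> lt_c lt_l; apply: leq_trans (occurs_at_min l0_lt s_min occ lt_l).
    by case: c lt_c => [|[|]] // _; rewrite ?addn0 ?addn1; lia.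
  rewrite /= size_tail !ltnS.
  case: a => [|[|a]]; case: b => [|[|b]] /= lt_a lt_b;
    rewrite ?nth_tail ?ltnn ?addn0 ?addn1 ?ltnS ?ord_eq //.
  - by move: (below_occ 0 b isT lt_b); rewrite addn0 => ->; lia.
  - by move: (below_occ 1 b isT lt_b); rewrite addn1 => ->; lia.
  - move: (below_occ 0 a isT lt_a); rewrite addn0 => /ltnW le_ia.
    by rewrite ltnNge le_ia; lia.
  - move: (below_occ 1 a isT lt_a); rewrite addn1 => /ltnW le_ia.
    by rewrite ltnNge le_ia; lia.
Qed.

Lemma gcontains_pat12 n (pi : 'S_n) :
  gcontains (pat12 sigma) pi <-> contains12 n k l0 s (pval pi).
Proof.
rewrite (@gcontains_shifted 1 2 n pi) // /contains12.
split=> [[i [j [lt_ij occ lt01 _ below]]]|[i [j [lt_ij occ lt01 below]]]]; exists i, j.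
- by move: below; rewrite gtn_max lt01 => /andP [].
- by split=> //; [rewrite ltnNge ltnW | rewrite gtn_max below (ltn_trans lt01)].
Qed.

Lemma gcontains_pat21 n (pi : 'S_n) :
  gcontains (pat21 sigma) pi <-> contains21 n k l0 s (pval pi).
Proof.
rewrite (@gcontains_shifted 2 1 n pi) // /contains21.
split=> [[i [j [lt_ij occ _ lt10 below]]]|[i [j [lt_ij occ lt10 below]]]]; exists i, j.
- by move: below; rewrite gtn_max lt10 => /andP [].
- by split=> //; [rewrite ltnNge ltnW | rewrite gtn_max below (ltn_trans lt10)].
Qed.

Section FlipPermutation.
Variable n : nat.

Let flip (pi : 'S_n) := run_flip (small n k l0 s (pval pi)) n.
Let small_bounded (pi : 'S_n) : forall p, small n k l0 s (pval pi) p -> p < n :=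
  @small_lt n k l0 s (pval pi).

Lemma run_flip_ord_lt (pi : 'S_n) (x : 'I_n) : flip pi x < n.
Proof. exact (run_flip_lt (@small_bounded pi) (ltn_ord x)). Qed.

Definition run_flip_ord (pi : 'S_n) (x : 'I_n) : 'I_n := Ordinal (run_flip_ord_lt pi x).

Lemma run_flip_ord_inj pi : injective (run_flip_ord pi).
Proof.
move=> x y /(congr1 (flip pi \o val)) /=.
by rewrite /flip !(run_flipK (@small_bounded pi)) => /val_inj.
Qed.

Definition run_flip_perm (pi : 'S_n) : 'S_n := perm (@run_flip_ord_inj pi).

Definition flip_runs (pi : 'S_n) : 'S_n := (run_flip_perm pi * pi)%g.

Lemma pval_flip_runs pi : pval (flip_runs pi) = pval pi \o flip pi.
Proof.
apply: functional_extensionality => p /=; have [lt_pn|le_np] := ltnP p n.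
  by rewrite (pvalE _ (Ordinal lt_pn)) permM permE -pvalE.
rewrite /flip run_flip_out ?pval_out //.
by apply: contraTN le_np => /small_lt; rewrite -ltnNge.
Qed.

Lemma run_flip_perm_flip_runs pi : run_flip_perm (flip_runs pi) = run_flip_perm pi.
Proof.
apply/permP => x; rewrite !permE; apply: val_inj => /=.
rewrite /flip pval_flip_runs; apply: run_flip_eq.
exact: (small_flip l0_lt s_min (@pval_lt n pi)).
Qed.

Lemma flip_runsK : involutive flip_runs.
Proof.
move=> pi; rewrite /flip_runs run_flip_perm_flip_runs mulgA.
suff -> : (run_flip_perm pi * run_flip_perm pi)%g = 1%g by rewrite mul1g.
apply/permP => x; rewrite permM perm1 !permE; apply: val_inj => /=.
exact: (run_flipK (@small_bounded pi)).
Qed.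

Lemma gcontains_flip_runs pi :
  gcontains (pat12 sigma) pi = gcontains (pat21 sigma) (flip_runs pi).
Proof.
apply/idP/idP => [/gcontains_pat12 | /gcontains_pat21] cont; last first.
  apply/gcontains_pat12; apply/(contains12_flip l0_lt s_min (@pval_lt n pi)).
  by rewrite -pval_flip_runs.
apply/gcontains_pat21; rewrite pval_flip_runs.
exact/(contains12_flip l0_lt s_min (@pval_lt n pi)).
Qed.

Lemma alpha_pat12_pat21 : alpha (pat12 sigma) n = alpha (pat21 sigma) n.
Proof.
rewrite /alpha.
rewrite -(card_preimset [set pi | ~~ gcontains (pat21 sigma) pi] (inv_inj flip_runsK)).
by apply: eq_card => pi; rewrite !inE gcontains_flip_runs.
Qed.
End FlipPermutation.
End ShiftedPattern.

Theorem mainTheorem8 (k : nat) (sigma : 'S_k) :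
  (1 <= k)%N -> egf (pat12 sigma) = egf (pat21 sigma).
Proof.
case: k sigma => [//|K] sigma _.
by apply: functional_extensionality => n; rewrite /egf alpha_pat12_pat21.
Qed.
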